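(* Let $\omega\in\Omega$ and let $C_\infty$ be an infinite contour of $\phi(\omega)$. Let $G\setminus C_\infty$ be the graph obtained from $G$ by removing all edges of $G$ crossed by edges of $C_\infty$. Then each infinite connected component of $G\setminus C_\infty$ contains an infinite cluster of $\omega$ that is incident to $C_\infty$.
   Context: Let $G$ be the square grid with vertex set $\mathbb{Z}^2$ and nearest-neighbour edges (unit segments). The face of $G$ with lower-left corner $(m,n)$ is black if $m+n$ is even, white otherwise. $\Omega\subset\{0,1\}^{\mathbb{Z}^2}$ is the set of $\omega$ such that for every black face the states of its four vertices, listed clockwise from the lower-left corner, form one of $0000,1111,0011,1100,0110,1001$. A cluster of $\omega$ is a maximal $G$-connected set of vertices on which $\omega$ is constant, infinite if it has infinitely many vertices. Let $\mathbb{L}_1$ have vertices $(m-\tfrac12,n+\tfrac12)$, $m,n$ both even, and $\mathbb{L}_2$ vertices $(m-\tfrac12,n+\tfrac12)$, $m,n$ both odd; in each, two vertices are joined by an edge (a closed segment of length $2$) iff at Euclidean distance $2$. The center of each black face $F$ is the midpoint of exactly one edge $e_1$ of $\mathbb{L}_1$ and one edge $e_2$ of $\mathbb{L}_2$. Define $\phi(\omega)\in\{0,1\}^{E(\mathbb{L}_1)\cup E(\mathbb{L}_2)}$: if the configuration around $F$ is $0000$ or $1111$ both get $0$; if the two upper vertices share a state different from the two lower ones, the horizontal one of $e_1,e_2$ gets $1$, the vertical $0$; if the two left vertices share a state different from the two right ones, the vertical one gets $1$, the horizontal $0$. Edges with value $1$ are present; a contour is a connected component of the set of present edges, infinite if it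 has infinitely many edges. A cluster is incident to a contour if some vertex of the cluster is at Euclidean distance $\tfrac12$ from some edge (segment) of the contour. *)

From Stdlib Require Import ZArith Reals Relations List.

Definition vertex : Type := (Z * Z)%type.

(* A configuration omega in {0,1}^{Z^2}; false = 0, true = 1. *)
Definition config : Type := vertex -> bool.

(* The face with lower-left corner (m,n) is black iff m+n is even. *)
Definition black (m n : Z) : Prop := Z.even (m + n) = true.

(* Allowed patterns, vertices listed clockwise from the lower-left corner:
   LL = (m,n), UL = (m,n+1), UR = (m+1,n+1), LR = (m+1,n). *)
Definition allowed (a b c d : bool) : Prop :=
  (a, b, c, d) = (false, false, false, false) \/
  (a, b, c, d) = (true, true, true, true) \/
  (a, b, c, d) = (false, false, true, true) \/
  (a, b, c, d) = (true, true, false, false) \/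
  (a, b, c, d) = (false, true, true, false) \/
  (a, b, c, d) = (true, false, false, true).

Definition in_Omega (w : config) : Prop :=
  forall m n : Z, black m n ->
    allowed (w (m, n)) (w (m, (n + 1)%Z)) (w ((m + 1)%Z, (n + 1)%Z)) (w ((m + 1)%Z, n)).

Definition adjG (u v : vertex) : Prop :=
  (Z.abs (fst u - fst v) + Z.abs (snd u - snd v) = 1)%Z.

Definition point : Type := (R * R)%type.

Definition ptZ (v : vertex) : point := (IZR (fst v), IZR (snd v)).

Definition on_seg (A B P : point) : Prop :=
  exists t : R, (0 <= t <= 1)%R /\
    P = (fst A + t * (fst B - fst A), snd A + t * (snd B - snd A))%R.

Definition segs_meet (A B C D : point) : Prop :=
  exists P, on_seg A B P /\ on_seg C D P.

Definition dist2 (P Q : point) : R :=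
  ((fst P - fst Q) ^ 2 + (snd P - snd Q) ^ 2)%R.

Definition seg_dist_is (A B P : point) (d : R) : Prop :=
  (exists Q, on_seg A B Q /\ dist2 P Q = (d ^ 2)%R) /\
  (forall Q, on_seg A B Q -> (d ^ 2 <= dist2 P Q)%R).

(* Every edge of L1 or L2 has as midpoint the center of a unique black face,
   and is horizontal or vertical; conversely the center of the black face F
   with lower-left corner (m,n) is the midpoint of exactly one horizontal and
   one vertical edge of L1 \cup L2 (one in L1, the other in L2).  We therefore
   index E(L1) \cup E(L2) by (m, n, orientation) with (m,n) black. *)
Inductive orient : Type := Hor | Ver.

Definition cedge : Type := (Z * Z * orient)%type.

Definition valid_cedge (e : cedge) : Prop :=
  let '(m, n, _) := e in black m n.

Definition cedge_A (e : cedge) : point :=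
  let '(m, n, o) := e in
  match o with
  | Hor => (IZR m - 1/2, IZR n + 1/2)%R
  | Ver => (IZR m + 1/2, IZR n - 1/2)%R
  end.

Definition cedge_B (e : cedge) : point :=
  let '(m, n, o) := e in
  match o with
  | Hor => (IZR m + 3/2, IZR n + 1/2)%R
  | Ver => (IZR m + 1/2, IZR n + 3/2)%R
  end.

(* phi(omega)(e) = 1, i.e. the edge e is present. *)
Definition present (w : config) (e : cedge) : Prop :=
  let '(m, n, o) := e in
  black m n /\
  let a := w (m, n) in
  let b := w (m, (n + 1)%Z) in
  let c := w ((m + 1)%Z, (n + 1)%Z) in
  let d := w ((m + 1)%Z, n) in
  match o with
  | Hor => b = c /\ a = d /\ b <> a
  | Ver => a = b /\ c = d /\ a <> c
  end.

Definition cadj (w : config) (e f : cedge) : Prop :=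
  present w e /\ present w f /\
  segs_meet (cedge_A e) (cedge_B e) (cedge_A f) (cedge_B f).

(* C is a contour of phi(omega): a connected component of the set of present
   edges (connectedness of the union of the closed segments). *)
Definition is_contour (w : config) (C : cedge -> Prop) : Prop :=
  exists e0, present w e0 /\
    forall e, C e <-> clos_refl_trans cedge (cadj w) e0 e.

Definition infinite {T : Type} (P : T -> Prop) : Prop :=
  forall l : list T, exists x, P x /\ ~ In x l.

Definition crossed (C : cedge -> Prop) (u v : vertex) : Prop :=
  exists e, C e /\ segs_meet (ptZ u) (ptZ v) (cedge_A e) (cedge_B e).

Definition adj_minus (C : cedge -> Prop) (u v : vertex) : Prop :=
  adjG u v /\ ~ crossed C u v.

Definition is_component_minus (C : cedge -> Prop) (K : vertex -> Prop) : Prop :=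
  exists v0, forall v, K v <-> clos_refl_trans vertex (adj_minus C) v0 v.

(* Cl is a cluster of omega: a maximal G-connected set on which omega is
   constant, i.e. the class of some v0 for G-paths along which omega is constant. *)
Definition is_cluster (w : config) (Cl : vertex -> Prop) : Prop :=
  exists v0, forall v,
    Cl v <-> clos_refl_trans vertex (fun x y => adjG x y /\ w x = w y) v0 v.

Definition incident (Cl : vertex -> Prop) (C : cedge -> Prop) : Prop :=
  exists v e, Cl v /\ C e /\ seg_dist_is (cedge_A e) (cedge_B e) (ptZ v) (1/2)%R.

From Stdlib Require Import ZArith Reals Relations List Lia Lra Bool Classical ClassicalEpsilon.
Open Scope Z_scope.

(* A G-path from K to an edge of C either reaches a corner of that edge or leaves K through
   a G-edge crossed by C, whose endpoints are corners of the crossing edge; let u be such a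
   corner in K. The cluster of u is incident to C, and it lies in K because a G-edge crossed
   by a present edge joins vertices in different states.

   Suppose the cluster is finite. The boundary edges of the cluster that are crossed by C are
   the jumps of a Z/2-valued function [inside] (the parity of such crossings along the ray to
   the right): this is consistent because the sides of a face met by C at all are crossed by
   C exactly where the state changes. [inside] is constant on K, which avoids C. If it is 1
   there, K is bounded. If it is 0, then "in the cluster or inside" propagates across every
   G-edge whose state change, if any, is crossed by C; walking along C through the white faces
   where consecutive edges meet, it reaches every corner of every edge of C, so C is bounded. *)

Lemma clos_rt_mono {T} (R S : relation T) a b :
  inclusion T R S -> clos_refl_trans T R a b -> clos_refl_trans T S a b.
Proof. intros H; induction 1; eauto using rt_step, rt_refl, rt_trans. Qed.

Lemma clos_rt_sym {T} (R : relation T) a b :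
  symmetric T R -> clos_refl_trans T R a b -> clos_refl_trans T R b a.
Proof. intros H; induction 1; eauto using rt_step, rt_refl, rt_trans. Qed.

Lemma clos_rt_invariant {T U} (R : relation T) (f : T -> U) a b :
  (forall x y, R x y -> f x = f y) -> clos_refl_trans T R a b -> f a = f b.
Proof. intros H; induction 1; [auto | reflexivity | congruence]. Qed.

Section RelationClass.
Variables (T : Type) (R : relation T) (x0 : T) (K : T -> Prop).
Hypothesis HK : forall x, K x <-> clos_refl_trans T R x0 x.

Lemma class_step a b : K a -> R a b -> K b.
Proof. rewrite !HK; eauto using rt_trans, rt_step. Qed.

Lemma class_closed a b : K a -> clos_refl_trans T R a b -> K b.
Proof. rewrite !HK; eauto using rt_trans. Qed.

Lemma class_connected a b : symmetric T R -> K a -> K b -> clos_refl_trans T R a b.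
Proof. rewrite !HK; eauto using rt_trans, clos_rt_sym. Qed.

End RelationClass.

Lemma Z_downward_ind (P : Z -> Prop) (N : Z) :
  (forall x, N <= x -> P x) -> (forall x, P (x + 1) -> P x) -> forall x, P x.
Proof.
  intros Hbase Hstep x. destruct (Z_le_gt_dec N x) as [H | H]; auto.
  replace x with (N - Z.of_nat (Z.to_nat (N - x))) by lia.
  induction (Z.to_nat (N - x)) as [|k IH]; [apply Hbase; lia|].
  apply Hstep. replace (N - Z.of_nat (S k) + 1) with (N - Z.of_nat k) by lia. exact IH.
Qed.

Lemma not_infinite_in_list {T} (P : T -> Prop) :
  ~ infinite P -> exists l, forall x, P x -> In x l.
Proof.
  intros H. apply not_all_ex_not in H as [l Hl].
  exists l. intros x Hx. apply NNPP. intros Hn. apply Hl. exists x. auto.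
Qed.

Lemma infinite_not_in_list {T} (P : T -> Prop) l :
  infinite P -> ~ (forall x, P x -> In x l).
Proof. intros Hi Hl. destruct (Hi l) as [x [Hx Hn]]. auto. Qed.

Lemma list_vertex_bound (l : list vertex) :
  exists B, forall v, In v l -> Z.abs (fst v) <= B /\ Z.abs (snd v) <= B.
Proof.
  induction l as [|a l [B HB]].
  - exists 0. intros v [].
  - exists (Z.max B (Z.max (Z.abs (fst a)) (Z.abs (snd a)))).
    intros v [<-|Hv]; [|apply HB in Hv]; lia.
Qed.

Lemma interval_list a b : exists l, forall z, a <= z <= b -> In z l.
Proof.
  exists (map (fun k => a + Z.of_nat k) (seq 0 (Z.to_nat (b - a + 1)))).
  intros z Hz. apply in_map_iff. exists (Z.to_nat (z - a)). split; [lia|].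
  apply in_seq. lia.
Qed.

Lemma vertex_box_list a b :
  exists l, forall v : vertex, a <= fst v <= b -> a <= snd v <= b -> In v l.
Proof.
  destruct (interval_list a b) as [l Hl]. exists (list_prod l l).
  intros [x y] Hx Hy. apply in_prod; auto.
Qed.

Lemma cedge_box_list a b :
  exists l, forall m n o, a <= m <= b -> a <= n <= b -> In ((m, n, o) : cedge) l.
Proof.
  destruct (interval_list a b) as [l Hl].
  exists (list_prod (list_prod l l) (Hor :: Ver :: nil)).
  intros m n o Hm Hn. apply in_prod; [apply in_prod; auto|]. destruct o; simpl; auto.
Qed.

Lemma adjG_sym : symmetric vertex adjG.
Proof. unfold adjG. intros u v. lia. Qed.

Lemma adjG_connected (a b : vertex) : clos_refl_trans vertex adjG a b.
Proof.
  assert (Hx : forall x y k, clos_refl_trans vertex adjG (x, y) (x + Z.of_nat k, y)).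
  { intros x y k; induction k; [replace (x + Z.of_nat 0) with x by lia; apply rt_refl|].
    eapply rt_trans; [apply IHk|]. apply rt_step. unfold adjG; simpl; lia. }
  assert (Hy : forall x y k, clos_refl_trans vertex adjG (x, y) (x, y + Z.of_nat k)).
  { intros x y k; induction k; [replace (y + Z.of_nat 0) with y by lia; apply rt_refl|].
    eapply rt_trans; [apply IHk|]. apply rt_step. unfold adjG; simpl; lia. }
  destruct a as [x y], b as [x' y']. apply rt_trans with (x', y).
  - destruct (Z_le_gt_dec x x').
    + replace x' with (x + Z.of_nat (Z.to_nat (x' - x))) by lia. apply Hx.
    + apply clos_rt_sym; [apply adjG_sym|].
      replace x with (x' + Z.of_nat (Z.to_nat (x - x'))) by lia. apply Hx.
  - destruct (Z_le_gt_dec y y').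
    + replace y' with (y + Z.of_nat (Z.to_nat (y' - y))) by lia. apply Hy.
    + apply clos_rt_sym; [apply adjG_sym|].
      replace y with (y' + Z.of_nat (Z.to_nat (y - y'))) by lia. apply Hy.
Qed.

(** * Lattice edges crossing the grid *)

Ltac int_bound := apply lt_IZR; rewrite ?plus_IZR, ?minus_IZR; lra.

Lemma on_seg_rev A B P : on_seg A B P -> on_seg B A P.
Proof.
  intros [t [Ht ->]]. exists (1 - t)%R. split; [lra|]. f_equal; simpl; ring.
Qed.

Lemma segs_meet_sym A B C D : segs_meet A B C D -> segs_meet C D A B.
Proof. intros [P [H1 H2]]. exists P; auto. Qed.

Lemma segs_meet_rev A B C D : segs_meet A B C D -> segs_meet B A C D.
Proof. intros [P [H1 H2]]. exists P; auto using on_seg_rev. Qed.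

Lemma segs_meet_hor_iff x y m n o :
  segs_meet (ptZ (x, y)) (ptZ (x + 1, y)) (cedge_A (m, n, o)) (cedge_B (m, n, o)) <->
  o = Ver /\ m = x /\ (n = y \/ n + 1 = y).
Proof.
  split.
  - intros [P [[t [Ht ->]] [s [Hs HQ]]]].
    unfold ptZ in HQ; simpl in HQ; rewrite plus_IZR in HQ.
    destruct o; simpl in HQ; injection HQ as Hx Hy; ring_simplify in Hx; ring_simplify in Hy.
    + assert (y < n + 1) by int_bound. assert (n < y) by int_bound. lia.
    + assert (m - 1 < x) by int_bound. assert (x < m + 1) by int_bound.
      assert (n - 1 < y) by int_bound. assert (y < n + 2) by int_bound.
      repeat split; lia.
  - intros [-> [-> Hy]]. exists (IZR x + 1/2, IZR y)%R. unfold ptZ; simpl. split.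
    + exists (1/2)%R. split; [lra|]. f_equal; simpl; rewrite ?plus_IZR; lra.
    + destruct Hy as [<-| <-]; [exists (1/4)%R | exists (3/4)%R];
        split; try lra; f_equal; simpl; rewrite ?plus_IZR; lra.
Qed.

Lemma segs_meet_ver_iff x y m n o :
  segs_meet (ptZ (x, y)) (ptZ (x, y + 1)) (cedge_A (m, n, o)) (cedge_B (m, n, o)) <->
  o = Hor /\ n = y /\ (m = x \/ m + 1 = x).
Proof.
  split.
  - intros [P [[t [Ht ->]] [s [Hs HQ]]]].
    unfold ptZ in HQ; simpl in HQ; rewrite plus_IZR in HQ.
    destruct o; simpl in HQ; injection HQ as Hx Hy; ring_simplify in Hx; ring_simplify in Hy.
    + assert (n - 1 < y) by int_bound. assert (y < n + 1) by int_bound.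
      assert (m - 1 < x) by int_bound. assert (x < m + 2) by int_bound.
      repeat split; lia.
    + assert (x < m + 1) by int_bound. assert (m < x) by int_bound. lia.
  - intros [-> [-> Hx]]. exists (IZR x, IZR y + 1/2)%R. unfold ptZ; simpl. split.
    + exists (1/2)%R. split; [lra|]. f_equal; simpl; rewrite ?plus_IZR; lra.
    + destruct Hx as [<-| <-]; [exists (1/4)%R | exists (3/4)%R];
        split; try lra; f_equal; simpl; rewrite ?plus_IZR; lra.
Qed.

Lemma even_succ a : Z.even (a + 1) = negb (Z.even a).
Proof. rewrite Z.even_add. simpl. destruct (Z.even a); reflexivity. Qed.

Lemma even_pred a : Z.even (a - 1) = negb (Z.even a).
Proof. rewrite Z.even_sub. simpl. destruct (Z.even a); reflexivity. Qed.

Lemma even_succ_l a b : Z.even (a + 1 + b) = negb (Z.even (a + b)).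
Proof. rewrite <- even_succ. f_equal. ring. Qed.

(* The edge of L1 or L2 crossing the G-edge from (x, y) to (x + 1, y) (resp. (x, y + 1)) is the
   vertical (resp. horizontal) one through the centre of whichever adjacent face is black. *)
Definition cross_h (x y : Z) : cedge :=
  if Z.even (x + y) then (x, y, Ver) else (x, y - 1, Ver).

Definition cross_v (x y : Z) : cedge :=
  if Z.even (x + y) then (x, y, Hor) else (x - 1, y, Hor).

Definition dual_edge (u v : vertex) : cedge :=
  let x := Z.min (fst u) (fst v) in
  let y := Z.min (snd u) (snd v) in
  if Z.eqb (snd u) (snd v) then cross_h x y else cross_v x y.

Lemma dual_edge_sym u v : dual_edge u v = dual_edge v u.
Proof.
  unfold dual_edge. rewrite Z.eqb_sym, (Z.min_comm (fst u)), (Z.min_comm (snd u)).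
  reflexivity.
Qed.

Lemma dual_edge_h x y : dual_edge (x, y) (x + 1, y) = cross_h x y.
Proof. unfold dual_edge; simpl. rewrite Z.eqb_refl, Z.min_l, Z.min_id by lia. reflexivity. Qed.

Lemma dual_edge_v x y : dual_edge (x, y) (x, y + 1) = cross_v x y.
Proof.
  unfold dual_edge; simpl. replace (y =? y + 1) with false by (symmetry; apply Z.eqb_neq; lia).
  rewrite Z.min_id, Z.min_l by lia. reflexivity.
Qed.

Lemma cross_h_valid x y : valid_cedge (cross_h x y).
Proof.
  unfold cross_h, valid_cedge, black. destruct (Z.even (x + y)) eqn:E; auto.
  replace (x + (y - 1)) with (x + y - 1) by lia. rewrite even_pred, E. reflexivity.
Qed.

Lemma cross_v_valid x y : valid_cedge (cross_v x y).
Proof.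
  unfold cross_v, valid_cedge, black. destruct (Z.even (x + y)) eqn:E; auto.
  replace (x - 1 + y) with (x + y - 1) by lia. rewrite even_pred, E. reflexivity.
Qed.

Lemma dual_edge_valid u v : valid_cedge (dual_edge u v).
Proof. unfold dual_edge. destruct (_ =? _); auto using cross_h_valid, cross_v_valid. Qed.

Lemma adjG_cases (P : vertex -> vertex -> Prop) :
  (forall u v, P u v -> P v u) ->
  (forall x y, P (x, y) (x + 1, y)) -> (forall x y, P (x, y) (x, y + 1)) ->
  forall u v, adjG u v -> P u v.
Proof.
  intros Hs Hh Hv [x y] [x' y'] H. unfold adjG in H; simpl in H.
  assert (Hc : (x' = x + 1 \/ x = x' + 1) /\ y' = y \/ x' = x /\ (y' = y + 1 \/ y = y' + 1))
    by lia.
  destruct Hc as [[[-> | ->] ->] | [-> [-> | ->]]]; auto.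
Qed.

Lemma segs_meet_dual u v : adjG u v -> forall e, valid_cedge e ->
  segs_meet (ptZ u) (ptZ v) (cedge_A e) (cedge_B e) <-> e = dual_edge u v.
Proof.
  revert u v. apply (adjG_cases (fun u v => forall e, valid_cedge e ->
    segs_meet (ptZ u) (ptZ v) (cedge_A e) (cedge_B e) <-> e = dual_edge u v)).
  - intros u v H e He. rewrite dual_edge_sym, <- H by assumption.
    split; apply segs_meet_rev.
  - intros x y [[m n] o] Hb. simpl in Hb. unfold black in Hb.
    rewrite dual_edge_h, segs_meet_hor_iff. unfold cross_h.
    destruct (Z.even (x + y)) eqn:E; split.
    + intros [-> [-> [-> | <-]]]; auto.
      rewrite Z.add_assoc, even_succ, Hb in E. discriminate.
    + intros H; injection H as -> -> ->. auto.
    + intros [-> [-> [-> | <-]]]; [congruence|]. do 2 f_equal. lia.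
    + intros H; injection H as -> -> ->. repeat split; lia.
  - intros x y [[m n] o] Hb. simpl in Hb. unfold black in Hb.
    rewrite dual_edge_v, segs_meet_ver_iff. unfold cross_v.
    destruct (Z.even (x + y)) eqn:E; split.
    + intros [-> [-> [-> | <-]]]; auto.
      rewrite even_succ_l, Hb in E. discriminate.
    + intros H; injection H as -> -> ->. auto.
    + intros [-> [-> [-> | <-]]]; [congruence|]. do 2 f_equal. lia.
    + intros H; injection H as -> -> ->. repeat split; lia.
Qed.

Lemma crossed_dual_iff (C : cedge -> Prop) u v :
  (forall e, C e -> valid_cedge e) -> adjG u v -> crossed C u v <-> C (dual_edge u v).
Proof.
  intros HC Huv. split.
  - intros [e [Ce Hm]]. apply segs_meet_dual in Hm; auto. subst; auto.
  - intros Ce. exists (dual_edge u v). split; auto.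
    apply segs_meet_dual; auto using dual_edge_valid.
Qed.

Definition face_corner (m n : Z) (v : vertex) : Prop :=
  (fst v = m \/ fst v = m + 1) /\ (snd v = n \/ snd v = n + 1).

Definition corner (e : cedge) (v : vertex) : Prop :=
  let '(m, n, _) := e in face_corner m n v.

Lemma corner_dual u v : adjG u v -> corner (dual_edge u v) u /\ corner (dual_edge u v) v.
Proof.
  revert u v.
  apply (adjG_cases (fun u v => corner (dual_edge u v) u /\ corner (dual_edge u v) v)).
  - intros u v [H1 H2]. rewrite dual_edge_sym. auto.
  - intros x y. rewrite dual_edge_h. unfold cross_h.
    destruct (Z.even (x + y)); simpl; unfold face_corner; simpl; lia.
  - intros x y. rewrite dual_edge_v. unfold cross_v.
    destruct (Z.even (x + y)); simpl; unfold face_corner; simpl; lia.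
Qed.

Lemma corner_seg_dist e v : corner e v -> seg_dist_is (cedge_A e) (cedge_B e) (ptZ v) (1/2).
Proof.
  destruct e as [[m n] o], v as [x y]. unfold corner, face_corner; simpl.
  intros [Hx Hy]. unfold seg_dist_is, dist2, ptZ; destruct o; cbn [fst snd cedge_A cedge_B]; split.
  - exists (IZR x, IZR n + 1/2)%R. split.
    + destruct Hx as [->| ->]; [exists (1/4)%R | exists (3/4)%R];
        split; try lra; f_equal; simpl; rewrite ?plus_IZR; lra.
    + simpl. destruct Hy as [->| ->]; rewrite ?plus_IZR; lra.
  - intros Q [t [Ht ->]]. cbn [fst snd].
    match goal with |- (_ <= ?a ^ 2 + _)%R => pose proof (pow2_ge_0 a) end.
    destruct Hy as [->| ->]; rewrite ?plus_IZR; nra.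
  - exists (IZR m + 1/2, IZR y)%R. split.
    + destruct Hy as [->| ->]; [exists (1/4)%R | exists (3/4)%R];
        split; try lra; f_equal; simpl; rewrite ?plus_IZR; lra.
    + simpl. destruct Hx as [->| ->]; rewrite ?plus_IZR; lra.
  - intros Q [t [Ht ->]]. cbn [fst snd].
    match goal with |- (_ <= _ + ?a ^ 2)%R => pose proof (pow2_ge_0 a) end.
    destruct Hx as [->| ->]; rewrite ?plus_IZR; nra.
Qed.

Definition face_side (m n : Z) (u v : vertex) : Prop :=
  (u, v) = ((m, n), (m, n + 1)) \/ (u, v) = ((m, n + 1), (m + 1, n + 1)) \/
  (u, v) = ((m + 1, n + 1), (m + 1, n)) \/ (u, v) = ((m + 1, n), (m, n)).

Lemma face_side_adjG m n u v : face_side m n u v -> adjG u v.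
Proof. unfold face_side, adjG. intros [H | [H | [H | H]]]; injection H as -> ->; simpl; lia. Qed.

Lemma face_side_dual m n u v : face_side m n u v ->
  dual_edge u v = cross_v m n \/ dual_edge u v = cross_h m (n + 1) \/
  dual_edge u v = cross_v (m + 1) n \/ dual_edge u v = cross_h m n.
Proof.
  unfold face_side. intros [H | [H | [H | H]]]; injection H as -> ->.
  - left. apply dual_edge_v.
  - right; left. apply dual_edge_h.
  - right; right; left. rewrite dual_edge_sym. apply dual_edge_v.
  - right; right; right. rewrite dual_edge_sym. apply dual_edge_h.
Qed.

(* [ends_at p q e]: an endpoint of [e] is the centre (p + 1/2, q + 1/2) of the face (p, q). *)
Definition ends_at (p q : Z) (e : cedge) : Prop :=
  e = (p - 1, q, Hor) \/ e = (p + 1, q, Hor) \/ e = (p, q - 1, Ver) \/ e = (p, q + 1, Ver).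

Ltac cedge_eq :=
  apply pair_equal_spec; split; [apply pair_equal_spec; split; lia | reflexivity].

Lemma face_side_dual_black m n u v : black m n -> face_side m n u v ->
  dual_edge u v = (m, n, Hor) \/ dual_edge u v = (m, n, Ver).
Proof.
  unfold black. intros Hb Hs.
  destruct (face_side_dual m n u v Hs) as [-> | [-> | [-> | ->]]]; unfold cross_h, cross_v.
  - rewrite Hb. auto.
  - rewrite Z.add_assoc, even_succ, Hb; cbn [negb]. right. cedge_eq.
  - rewrite even_succ_l, Hb; cbn [negb]. left. cedge_eq.
  - rewrite Hb. auto.
Qed.

Lemma face_side_dual_white m n u v : Z.even (m + n) = false -> face_side m n u v ->
  ends_at m n (dual_edge u v).
Proof.
  unfold ends_at. intros Hw Hs.
  destruct (face_side_dual m n u v Hs) as [-> | [-> | [-> | ->]]]; unfold cross_h, cross_v.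
  - rewrite Hw. auto.
  - rewrite Z.add_assoc, even_succ, Hw; cbn [negb]; auto.
  - rewrite even_succ_l, Hw; cbn [negb]; auto.
  - rewrite Hw. auto.
Qed.

Lemma face_side_of_edge m n o : black m n ->
  exists u v, face_side m n u v /\ dual_edge u v = (m, n, o).
Proof.
  unfold black. intros Hb. destruct o.
  - exists (m, n), (m, n + 1). split; [left; reflexivity|].
    rewrite dual_edge_v. unfold cross_v. rewrite Hb. reflexivity.
  - exists (m + 1, n), (m, n). split; [right; right; right; reflexivity|].
    rewrite dual_edge_sym, dual_edge_h. unfold cross_h. rewrite Hb. reflexivity.
Qed.

Lemma ends_at_white p q e : valid_cedge e -> ends_at p q e -> Z.even (p + q) = false.
Proof.
  unfold ends_at, valid_cedge, black. intros Hb He.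
  destruct (Z.even (p + q)) eqn:E; [exfalso | reflexivity].
  apply Z.even_spec in E as [k Hk].
  destruct He as [-> | [-> | [-> | ->]]]; apply Z.even_spec in Hb as [k' Hk']; lia.
Qed.

Lemma face_side_of_end p q e : valid_cedge e -> ends_at p q e ->
  exists u v, face_side p q u v /\ dual_edge u v = e.
Proof.
  intros Hv He. pose proof (ends_at_white p q e Hv He) as Hw.
  unfold face_side; destruct He as [-> | [-> | [-> | ->]]].
  - exists (p, q), (p, q + 1). split; [auto|].
    rewrite dual_edge_v. unfold cross_v. rewrite Hw. reflexivity.
  - exists (p + 1, q + 1), (p + 1, q). split; [auto|].
    rewrite dual_edge_sym, dual_edge_v. unfold cross_v.
    rewrite even_succ_l, Hw. reflexivity.
  - exists (p + 1, q), (p, q). split; [auto|].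
    rewrite dual_edge_sym, dual_edge_h. unfold cross_h. rewrite Hw. reflexivity.
  - exists (p, q + 1), (p + 1, q + 1). split; [auto|].
    rewrite dual_edge_h. unfold cross_h. rewrite Z.add_assoc, even_succ, Hw. reflexivity.
Qed.

Lemma ends_at_corner p q e : ends_at p q e -> exists v, corner e v /\ face_corner p q v.
Proof.
  unfold ends_at, corner, face_corner.
  intros [-> | [-> | [-> | ->]]];
    [exists (p, q) | exists (p + 1, q) | exists (p, q) | exists (p, q + 1)];
    simpl; lia.
Qed.

(** * Present edges *)

Lemma present_valid w e : present w e -> valid_cedge e.
Proof. destruct e as [[m n] o]. unfold present. tauto. Qed.

Lemma present_hor_ver w m n : present w (m, n, Hor) -> ~ present w (m, n, Ver).
Proof. unfold present. simpl. intros [_ [H1 [H2 H3]]] [_ [H4 [H5 H6]]]. congruence. Qed.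

Lemma allowed_pairs a b c d : allowed a b c d -> (a = b /\ c = d) \/ (a = d /\ b = c).
Proof. unfold allowed. intros H. repeat destruct H as [H|H]; injection H; intros; subst; auto. Qed.

Lemma present_ver_iff w m n : in_Omega w -> black m n ->
  (present w (m, n, Ver) <-> w (m, n) <> w (m + 1, n)) /\
  (present w (m, n, Ver) <-> w (m, n + 1) <> w (m + 1, n + 1)).
Proof.
  intros Hw Hb. pose proof (allowed_pairs _ _ _ _ (Hw m n Hb)) as H. unfold present.
  destruct (w (m, n)), (w (m, n + 1)), (w (m + 1, n + 1)), (w (m + 1, n));
    intuition congruence.
Qed.

Lemma present_hor_iff w m n : in_Omega w -> black m n ->
  (present w (m, n, Hor) <-> w (m, n) <> w (m, n + 1)) /\
  (present w (m, n, Hor) <-> w (m + 1, n) <> w (m + 1, n + 1)).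
Proof.
  intros Hw Hb. pose proof (allowed_pairs _ _ _ _ (Hw m n Hb)) as H. unfold present.
  destruct (w (m, n)), (w (m, n + 1)), (w (m + 1, n + 1)), (w (m + 1, n));
    intuition congruence.
Qed.

Lemma present_dual_iff w u v : in_Omega w -> adjG u v ->
  present w (dual_edge u v) <-> w u <> w v.
Proof.
  intros Hw. revert u v.
  apply (adjG_cases (fun u v => present w (dual_edge u v) <-> w u <> w v)).
  - intros u v H. rewrite dual_edge_sym, H. split; auto.
  - intros x y. rewrite dual_edge_h. pose proof (cross_h_valid x y) as Hb.
    unfold cross_h in *. destruct (Z.even (x + y)).
    + apply (present_ver_iff w x y Hw Hb).
    + rewrite (proj2 (present_ver_iff w x (y - 1) Hw Hb)).
      replace (y - 1 + 1) with y by lia. reflexivity.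
  - intros x y. rewrite dual_edge_v. pose proof (cross_v_valid x y) as Hb.
    unfold cross_v in *. destruct (Z.even (x + y)).
    + apply (present_hor_iff w x y Hw Hb).
    + rewrite (proj2 (present_hor_iff w (x - 1) y Hw Hb)).
      replace (x - 1 + 1) with x by lia. reflexivity.
Qed.

Lemma ends_at_on_seg p q e : ends_at p q e ->
  on_seg (cedge_A e) (cedge_B e) (IZR p + 1/2, IZR q + 1/2)%R.
Proof.
  unfold ends_at; intros [-> | [-> | [-> | ->]]]; simpl;
    [exists 1%R | exists 0%R | exists 1%R | exists 0%R];
    split; try lra; f_equal; simpl; rewrite ?minus_IZR, ?plus_IZR; lra.
Qed.

Lemma cadj_of_ends_at w p q e f :
  present w e -> present w f -> ends_at p q e -> ends_at p q f -> cadj w e f.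
Proof.
  intros. repeat split; auto.
  exists (IZR p + 1/2, IZR q + 1/2)%R. split; apply ends_at_on_seg; auto.
Qed.

Ltac solve_ends_at := unfold ends_at;
  first [ left; cedge_eq | right; left; cedge_eq
        | right; right; left; cedge_eq | right; right; right; cedge_eq ].

Lemma present_hor_ver_meet w m n m' n' : present w (m, n, Hor) -> present w (m', n', Ver) ->
  segs_meet (cedge_A (m, n, Hor)) (cedge_B (m, n, Hor))
            (cedge_A (m', n', Ver)) (cedge_B (m', n', Ver)) ->
  exists p q, ends_at p q (m, n, Hor) /\ ends_at p q (m', n', Ver).
Proof.
  intros He Hf [P [[t [Ht ->]] [s [Hs HQ]]]].
  simpl in HQ. injection HQ as Hx Hy. ring_simplify in Hx. ring_simplify in Hy.
  pose proof (present_valid w _ He) as Hb. pose proof (present_valid w _ Hf) as Hb'.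
  simpl in Hb, Hb'. unfold black in Hb, Hb'.
  apply Z.even_spec in Hb as [k Hk]. apply Z.even_spec in Hb' as [k' Hk'].
  assert (m - 2 < m') by int_bound. assert (m' < m + 2) by int_bound.
  assert (n - 2 < n') by int_bound. assert (n' < n + 2) by int_bound.
  assert (Hc : (m' = m - 1 \/ m' = m + 1) /\ (n' = n - 1 \/ n' = n + 1) \/ (m' = m /\ n' = n))
    by lia.
  destruct Hc as [[[-> | ->] [-> | ->]] | [-> ->]];
    [exists (m - 1), n | exists (m - 1), n | exists (m + 1), n | exists (m + 1), n
    | exfalso; eapply present_hor_ver; eauto];
    split; solve_ends_at.
Qed.

Lemma present_edges_meet w e f : present w e -> present w f ->
  segs_meet (cedge_A e) (cedge_B e) (cedge_A f) (cedge_B f) ->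
  e = f \/ exists p q, ends_at p q e /\ ends_at p q f.
Proof.
  destruct e as [[m n] o], f as [[m' n'] o']. intros He Hf Hm.
  destruct o, o'.
  3: { right. destruct (present_hor_ver_meet w m' n' m n Hf He (segs_meet_sym _ _ _ _ Hm))
         as [p [q [H1 H2]]]. eauto. }
  2: { right. eapply present_hor_ver_meet; eauto. }
  all: destruct Hm as [P [[t [Ht ->]] [s [Hs HQ]]]].
  all: simpl in HQ; injection HQ as Hx Hy; ring_simplify in Hx; ring_simplify in Hy.
  all: pose proof (present_valid w _ He) as Hb; pose proof (present_valid w _ Hf) as Hb'.
  all: simpl in Hb, Hb'; unfold black in Hb, Hb'.
  all: apply Z.even_spec in Hb as [k Hk]; apply Z.even_spec in Hb' as [k' Hk'].
  - assert (n - 1 < n') by int_bound. assert (n' < n + 1) by int_bound.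
    assert (m - 3 < m') by int_bound. assert (m' < m + 3) by int_bound.
    assert (Hc : n' = n /\ (m' = m - 2 \/ m' = m \/ m' = m + 2)) by lia.
    destruct Hc as [-> [-> | [-> | ->]]]; auto;
      right; [exists (m - 1), n | exists (m + 1), n]; split; solve_ends_at.
  - assert (m - 1 < m') by int_bound. assert (m' < m + 1) by int_bound.
    assert (n - 3 < n') by int_bound. assert (n' < n + 3) by int_bound.
    assert (Hc : m' = m /\ (n' = n - 2 \/ n' = n \/ n' = n + 2)) by lia.
    destruct Hc as [-> [-> | [-> | ->]]]; auto;
      right; [exists m, (n - 1) | exists m, (n + 1)]; split; solve_ends_at.
Qed.

Lemma cadj_sym w : symmetric cedge (cadj w).
Proof. intros e f [He [Hf Hm]]. repeat split; auto using segs_meet_sym. Qed.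

Definition cluster (w : config) (u : vertex) : vertex -> Prop :=
  clos_refl_trans vertex (fun x y => adjG x y /\ w x = w y) u.

Definition decide (P : Prop) : bool :=
  if excluded_middle_informative P then true else false.

Lemma decide_spec P : decide P = true <-> P.
Proof. unfold decide. destruct (excluded_middle_informative P); intuition discriminate. Qed.

Lemma decide_false P : ~ P -> decide P = false.
Proof. unfold decide. destruct (excluded_middle_informative P); tauto. Qed.

Lemma decide_iff P Q : (P <-> Q) -> decide P = decide Q.
Proof.
  unfold decide. intros H.
  destruct (excluded_middle_informative P), (excluded_middle_informative Q); tauto.
Qed.

(** * Contours and the parity function of a bounded cluster *)

Section Contour.

Variables (w : config) (C : cedge -> Prop) (e0 : cedge).
Hypothesis Hw : in_Omega w.
Hypothesis He0 : present w e0.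
Hypothesis HC : forall e, C e <-> clos_refl_trans cedge (cadj w) e0 e.

Lemma contour_present e : C e -> present w e.
Proof.
  rewrite HC. intros H.
  induction H as [| f g _ _ [_ [Pg _]]] using clos_refl_trans_ind_left; auto.
Qed.

Lemma contour_crossed_iff u v : adjG u v -> crossed C u v <-> C (dual_edge u v).
Proof.
  apply crossed_dual_iff. intros e Ce. eapply present_valid, contour_present, Ce.
Qed.

Lemma crossed_states_differ u v : adjG u v -> crossed C u v -> w u <> w v.
Proof.
  intros Huv Hc. apply present_dual_iff; auto.
  apply contour_present, contour_crossed_iff; auto.
Qed.

Lemma face_contour_coherent m n u v u' v' : face_side m n u v -> face_side m n u' v' ->
  C (dual_edge u v) -> w u' <> w v' -> C (dual_edge u' v').
Proof.
  intros Hs Hs' Ce Hd.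
  apply present_dual_iff in Hd; [|auto|eapply face_side_adjG; eauto].
  pose proof (contour_present _ Ce) as Hp.
  destruct (Z.even (m + n)) eqn:E.
  - destruct (face_side_dual_black m n u v E Hs) as [He | He],
      (face_side_dual_black m n u' v' E Hs') as [He' | He'];
      rewrite ?He, ?He' in *; auto; exfalso; eapply present_hor_ver; eauto.
  - eapply (class_step _ _ _ _ HC); eauto.
    apply cadj_of_ends_at with m n; auto using face_side_dual_white.
Qed.

Section Component.

Variables (K : vertex -> Prop) (v0 : vertex).
Hypothesis HK : forall v, K v <-> clos_refl_trans vertex (adj_minus C) v0 v.

Lemma component_meets_contour_corner : exists u e, K u /\ C e /\ corner e u.
Proof.
  assert (Hexit : forall a b, clos_refl_trans_1n vertex adjG a b -> K a ->
    K b \/ exists u u', K u /\ adjG u u' /\ crossed C u u').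
  { induction 1 as [x | x y z Hxy Hyz IH]; intros Kx; auto.
    destruct (classic (crossed C x y)) as [Hc | Hc]; [right; eauto|].
    apply IH. eapply (class_step _ _ _ _ HK); eauto. split; auto. }
  assert (Hc0 : exists c, corner e0 c).
  { destruct e0 as [[m n] o]. exists (m, n). unfold corner, face_corner; simpl; lia. }
  destruct Hc0 as [c Hc0].
  destruct (Hexit v0 c (clos_rt_rt1n _ _ _ _ (adjG_connected _ _)) (proj2 (HK v0) (rt_refl _ _ _)))
    as [Kmn | [u [u' [Ku [Huu' Hc]]]]].
  - exists c, e0. split; [|split]; auto. apply HC, rt_refl.
  - exists u, (dual_edge u u'). split; [|split].
    + assumption.
    + apply contour_crossed_iff; auto.
    + apply corner_dual; auto.
Qed.

Lemma cluster_in_component u : K u -> forall v, cluster w u v -> K v.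
Proof.
  intros Ku v Hv. rewrite HK in *. eapply rt_trans; [exact Ku|].
  revert Hv. apply clos_rt_mono. intros x y [Hxy Hs]. split; auto.
  intros Hc. apply (crossed_states_differ x y); auto.
Qed.

End Component.

Section Cluster.

Variable u0 : vertex.

Definition in_cluster (v : vertex) : bool := decide (cluster w u0 v).

Definition crossed_exit (a b : vertex) : bool :=
  xorb (in_cluster a) (in_cluster b) && decide (C (dual_edge a b)).

Lemma crossed_exit_sym a b : crossed_exit a b = crossed_exit b a.
Proof. unfold crossed_exit. rewrite xorb_comm, dual_edge_sym. reflexivity. Qed.

Lemma crossed_exit_outside a b : ~ cluster w u0 a -> ~ cluster w u0 b -> crossed_exit a b = false.
Proof.
  intros Ha Hb. unfold crossed_exit, in_cluster. rewrite !decide_false by assumption. reflexivity.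
Qed.

Lemma crossed_exit_uncrossed a b : adjG a b -> ~ crossed C a b -> crossed_exit a b = false.
Proof.
  intros Hab Hc. unfold crossed_exit. destruct (decide (C (dual_edge a b))) eqn:E.
  - rewrite decide_spec, <- contour_crossed_iff in E by assumption; tauto.
  - apply andb_false_r.
Qed.

Lemma in_cluster_differ_states a b : adjG a b -> in_cluster a <> in_cluster b -> w a <> w b.
Proof.
  intros Hab Hne Heq. apply Hne. apply decide_iff. unfold cluster.
  split; intros H; eapply rt_trans; eauto; apply rt_step; split; auto; apply adjG_sym; auto.
Qed.

Lemma crossed_exit_true a b : adjG a b -> (w a <> w b -> crossed C a b) ->
  cluster w u0 a -> ~ cluster w u0 b -> crossed_exit a b = true.
Proof.
  intros Hab Hresp Ha Hb.
  assert (Hin : in_cluster a = true /\ in_cluster b = false)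
    by (split; [apply decide_spec | apply decide_false]; auto).
  destruct Hin as [Ha' Hb']. unfold crossed_exit. rewrite Ha', Hb'.
  apply decide_spec, contour_crossed_iff, Hresp; auto.
  apply in_cluster_differ_states; congruence.
Qed.

Lemma face_parity m n :
  xorb (xorb (crossed_exit (m, n) (m, n + 1)) (crossed_exit (m, n + 1) (m + 1, n + 1)))
       (xorb (crossed_exit (m + 1, n + 1) (m + 1, n)) (crossed_exit (m + 1, n) (m, n))) = false.
Proof.
  assert (Hsides :
    (forall u v, face_side m n u v -> crossed_exit u v = xorb (in_cluster u) (in_cluster v)) \/
                   (forall u v, face_side m n u v -> crossed_exit u v = false)).
  { destruct (classic (exists u v, face_side m n u v /\ C (dual_edge u v)))
      as [[u [v [Hs Ce]]] | Hno].
    - left. intros u' v' Hs'. unfold crossed_exit.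
      destruct (xorb (in_cluster u') (in_cluster v')) eqn:E; [|reflexivity].
      apply decide_spec, (face_contour_coherent m n u v u' v'); auto.
      apply in_cluster_differ_states; [eapply face_side_adjG; eauto|].
      intros Heq. rewrite Heq, xorb_nilpotent in E. discriminate.
    - right. intros u v Hs. unfold crossed_exit.
      rewrite decide_false; [apply andb_false_r | intros Hc; apply Hno; eauto]. }
  destruct Hsides as [H | H]; rewrite !H by (unfold face_side; auto); [|reflexivity].
  destruct (in_cluster (m, n)), (in_cluster (m, n + 1)),
    (in_cluster (m + 1, n + 1)), (in_cluster (m + 1, n));
    reflexivity.
Qed.

Section Bounded.

Variable B : Z.
Hypothesis HB : forall v, cluster w u0 v -> Z.abs (fst v) <= B /\ Z.abs (snd v) <= B.

Lemma crossed_exit_far a b : B < Z.abs (fst a) \/ B < Z.abs (snd a) ->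
  B < Z.abs (fst b) \/ B < Z.abs (snd b) -> crossed_exit a b = false.
Proof. intros Ha Hb. apply crossed_exit_outside; intros H; apply HB in H; lia. Qed.

Fixpoint row_parity (k : nat) (x y : Z) : bool :=
  match k with
  | O => false
  | S k => xorb (crossed_exit (x, y) (x + 1, y)) (row_parity k (x + 1) y)
  end.

(* The parity of the number of boundary edges of the cluster crossed by [C] on the horizontal
   ray from [v] to the right; none lies beyond abscissa [B]. *)
Definition inside (v : vertex) : bool :=
  row_parity (Z.to_nat (B + 1 - fst v)) (fst v) (snd v).

Lemma inside_far_right x y : B + 1 <= x -> inside (x, y) = false.
Proof.
  intros H. unfold inside; simpl. replace (Z.to_nat (B + 1 - x)) with O by lia. reflexivity.
Qed.

Lemma inside_step_h x y : inside (x, y) = xorb (crossed_exit (x, y) (x + 1, y)) (inside (x + 1, y)).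
Proof.
  destruct (Z_lt_ge_dec x (B + 1)).
  - unfold inside; simpl.
    replace (Z.to_nat (B + 1 - x)) with (S (Z.to_nat (B + 1 - (x + 1)))) by lia.
    reflexivity.
  - rewrite !inside_far_right, crossed_exit_far by (simpl; lia). reflexivity.
Qed.

Lemma inside_step_v x y : xorb (inside (x, y)) (inside (x, y + 1)) = crossed_exit (x, y) (x, y + 1).
Proof.
  revert x y. refine (Z_downward_ind _ (B + 1) _ _).
  - intros x Hx y. rewrite !inside_far_right, crossed_exit_far by (simpl; lia). reflexivity.
  - intros x IH y. specialize (IH y).
    pose proof (face_parity x y) as FP.
    rewrite (crossed_exit_sym (x + 1, y + 1) (x + 1, y)),
      (crossed_exit_sym (x + 1, y) (x, y)) in FP.
    rewrite (inside_step_h x y), (inside_step_h x (y + 1)).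
    destruct (inside (x + 1, y)), (inside (x + 1, y + 1)), (crossed_exit (x, y) (x + 1, y)),
      (crossed_exit (x, y + 1) (x + 1, y + 1)), (crossed_exit (x, y) (x, y + 1)),
      (crossed_exit (x + 1, y) (x + 1, y + 1));
      simpl in *; congruence.
Qed.

Lemma inside_adj a b : adjG a b -> xorb (inside a) (inside b) = crossed_exit a b.
Proof.
  revert a b. apply (adjG_cases (fun a b => xorb (inside a) (inside b) = crossed_exit a b)).
  - intros a b H. rewrite xorb_comm, crossed_exit_sym. exact H.
  - intros x y. rewrite inside_step_h. destruct (crossed_exit _ _), (inside _); reflexivity.
  - apply inside_step_v.
Qed.

Lemma inside_true_bounded v : inside v = true -> Z.abs (fst v) <= B /\ Z.abs (snd v) <= B.
Proof.
  assert (Hrow : forall y x, B < Z.abs y -> inside (x, y) = false).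
  { intros y. refine (Z_downward_ind _ (B + 1) _ _).
    - intros x Hx _. apply inside_far_right; lia.
    - intros x IH Hy. rewrite inside_step_h, IH, crossed_exit_far by (simpl; lia). reflexivity. }
  assert (Hcol : forall x y, B < Z.abs x -> inside (x, y) = false).
  { intros x. refine (Z_downward_ind _ (B + 1) _ _).
    - intros y Hy _. apply Hrow; lia.
    - intros y IH Hx. pose proof (inside_step_v x y) as H.
      rewrite IH, crossed_exit_far in H by (simpl; lia). destruct (inside (x, y)); auto. }
  destruct v as [x y]. intros H. simpl.
  destruct (Z_le_gt_dec (Z.abs x) B), (Z_le_gt_dec (Z.abs y) B); auto;
    [rewrite Hrow in H by lia | rewrite Hcol in H by lia | rewrite Hcol in H by lia];
    discriminate.
Qed.

Section InsideVanishesOnCluster.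

Hypothesis Hzero : forall v, cluster w u0 v -> inside v = false.

Definition enclosed (v : vertex) : Prop := cluster w u0 v \/ inside v = true.

Lemma enclosed_step a b : adjG a b -> (w a <> w b -> crossed C a b) -> enclosed a -> enclosed b.
Proof.
  intros Hab Hresp Ga. pose proof (inside_adj a b Hab) as Hx. unfold enclosed.
  destruct (classic (cluster w u0 b)) as [Cb | Cb]; [left; auto | right].
  destruct (classic (cluster w u0 a)) as [Ca | Ca].
  - rewrite Hzero, crossed_exit_true in Hx by auto. destruct (inside b); auto.
  - destruct Ga as [Ca' | Ia]; [contradiction|].
    rewrite Ia, crossed_exit_outside in Hx by auto. destruct (inside b); auto.
Qed.

Lemma face_corner_cases m n v : face_corner m n v ->
  v = (m, n) \/ v = (m, n + 1) \/ v = (m + 1, n + 1) \/ v = (m + 1, n).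
Proof. destruct v as [x y]. unfold face_corner; simpl. intros [[-> | ->] [-> | ->]]; tauto. Qed.

Lemma face_enclosed m n : (exists u v, face_side m n u v /\ C (dual_edge u v)) ->
  (exists v, face_corner m n v /\ enclosed v) -> forall v, face_corner m n v -> enclosed v.
Proof.
  intros [u [v [Hs Ce]]] [a [Ha Ga]].
  assert (Hside : forall u' v', face_side m n u' v' -> enclosed u' -> enclosed v').
  { intros u' v' Hs'. apply enclosed_step; [eapply face_side_adjG; eauto|].
    intros Hd. apply contour_crossed_iff; [eapply face_side_adjG; eauto|].
    apply (face_contour_coherent m n u v u' v'); auto. }
  assert (H1 := Hside (m, n) (m, n + 1) ltac:(unfold face_side; auto)).
  assert (H2 := Hside (m, n + 1) (m + 1, n + 1) ltac:(unfold face_side; auto)).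
  assert (H3 := Hside (m + 1, n + 1) (m + 1, n) ltac:(unfold face_side; auto)).
  assert (H4 := Hside (m + 1, n) (m, n) ltac:(unfold face_side; auto)).
  assert (Hall : enclosed (m, n) /\ enclosed (m, n + 1) /\
                 enclosed (m + 1, n + 1) /\ enclosed (m + 1, n))
    by (destruct (face_corner_cases m n a Ha) as [-> | [-> | [-> | ->]]]; tauto).
  intros b Hb. destruct (face_corner_cases m n b Hb) as [-> | [-> | [-> | ->]]]; tauto.
Qed.

Lemma contour_edge_enclosed f : C f -> (exists v, corner f v /\ enclosed v) ->
  forall v, corner f v -> enclosed v.
Proof.
  destruct f as [[m n] o]. intros Cf. apply face_enclosed.
  destruct (face_side_of_edge m n o) as [u [v [Hs He]]].
  - exact (present_valid _ _ (contour_present _ Cf)).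
  - exists u, v. rewrite He. auto.
Qed.

Lemma contour_enclosed e1 : C e1 -> corner e1 u0 ->
  forall f, C f -> forall v, corner f v -> enclosed v.
Proof.
  intros Ce1 Hcorner f Cf.
  assert (Hpath : clos_refl_trans cedge (cadj w) e1 f)
    by (apply (class_connected _ _ _ _ HC); auto using cadj_sym).
  clear Cf. induction Hpath as [| g h Hpath IH Hgh] using clos_refl_trans_ind_left.
  - apply contour_edge_enclosed; auto. exists u0. split; [auto | left; apply rt_refl].
  - assert (Ch : C h) by (eapply (class_closed _ _ _ _ HC); [exact Ce1|];
      eapply rt_trans; [exact Hpath | apply rt_step; exact Hgh]).
    destruct Hgh as [Pg [Ph Hm]].
    destruct (present_edges_meet w g h Pg Ph Hm) as [<- | [p [q [Hg Hh]]]]; auto.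
    destruct (ends_at_corner p q g Hg) as [a [Ha Ha']].
    destruct (ends_at_corner p q h Hh) as [b [Hb Hb']].
    apply contour_edge_enclosed; auto. exists b. split; auto.
    apply (face_enclosed p q); eauto.
    destruct (face_side_of_end p q h (present_valid _ _ Ph) Hh) as [u [v [Hs Hd]]].
    exists u, v. rewrite Hd. auto.
Qed.

End InsideVanishesOnCluster.

Lemma bounded_cluster_absurd K v0 e1 :
  (forall v, K v <-> clos_refl_trans vertex (adj_minus C) v0 v) -> infinite K -> infinite C ->
  K u0 -> C e1 -> corner e1 u0 -> False.
Proof.
  intros HK HKinf HCinf Ku Ce1 Hcorner.
  assert (Hconst : forall v, K v -> inside v = inside v0).
  { intros v Kv. symmetry. rewrite HK in Kv. revert Kv. apply clos_rt_invariant.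
    intros x y [Hxy Hc]. apply Bool.xorb_eq. rewrite inside_adj, crossed_exit_uncrossed; auto. }
  destruct (inside v0) eqn:E.
  - destruct (vertex_box_list (- B) B) as [l Hl].
    apply (infinite_not_in_list K l HKinf). intros v Kv.
    assert (Hv : inside v = true) by (rewrite Hconst; auto).
    apply inside_true_bounded in Hv. apply Hl; lia.
  - assert (Hzero : forall v, cluster w u0 v -> inside v = false)
      by (intros v Hv; rewrite Hconst; [reflexivity | eapply cluster_in_component; eauto]).
    destruct (cedge_box_list (- B) B) as [l Hl].
    apply (infinite_not_in_list C l HCinf). intros [[m n] o] Cf.
    assert (Hmn : corner (m, n, o) (m, n)) by (unfold corner, face_corner; simpl; lia).
    destruct (contour_enclosed Hzero e1 Ce1 Hcorner _ Cf _ Hmn) as [Hv | Hv];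
      [apply HB in Hv | apply inside_true_bounded in Hv]; apply Hl; simpl in Hv; lia.
Qed.

End Bounded.
End Cluster.

End Contour.

Theorem lemma2p7 (w : config) (C : cedge -> Prop) :
  in_Omega w -> is_contour w C -> infinite C ->
  forall K : vertex -> Prop,
    is_component_minus C K -> infinite K ->
    exists Cl : vertex -> Prop,
      is_cluster w Cl /\ infinite Cl /\ (forall v, Cl v -> K v) /\ incident Cl C.
Proof.
  intros Hw [e0 [He0 HC]] HCinf K [v0 HK] HKinf.
  destruct (component_meets_contour_corner w C e0 He0 HC K v0 HK) as [u [e [Ku [Ce Hue]]]].
  exists (cluster w u). split; [|split; [|split]].
  - exists u. reflexivity.
  - apply NNPP. intros Hfin.
    destruct (not_infinite_in_list _ Hfin) as [l Hl].
    destruct (list_vertex_bound l) as [B HB].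
    apply (bounded_cluster_absurd w C e0 Hw He0 HC u B (fun v Hv => HB v (Hl v Hv)) K v0 e);
      assumption.
  - exact (cluster_in_component w C e0 Hw He0 HC K v0 HK u Ku).
  - exists u, e. split; [apply rt_refl | split; [assumption | apply corner_seg_dist; assumption]].
Qed.
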